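(* Consider the stochastic bipartite matching model described in the context, under the stability condition, with stationary distribution $\pi$. Fix $i\in\mathcal{I}$, and for $\mathcal{A}\in\mathcal{J}_0$ define $\ell_i(\mathcal{A})=\sum_{(c,d)\in\Pi_{\mathcal{A}}}|c|_i\,\pi(c,d)$ (so that $\ell_i(\mathcal{A})/\pi(\mathcal{A})$ is the stationary mean number of unmatched class-$i$ customers given that the set of unmatched classes is $\mathcal{A}$), with the convention $\ell_i(\mathcal{A})=0$ if $\mathcal{A}\notin\mathcal{J}_0$. Then the stationary mean number of unmatched class-$i$ customers is $L_i=\sum_{\mathcal{A}\in\mathcal{J}_0}\ell_i(\mathcal{A})$, we have $\ell_i(\mathcal{A})=0$ whenever $i\notin\mathcal{A}$, and for each $\mathcal{A}\in\mathcal{J}$ with $i\in\mathcal{A}$, \[ \begin{aligned} \Delta(\mathcal{A})\,\ell_i(\mathcal{A}) ={}& \lambda_i\,\mu(\mathcal{A}\cap\mathcal{K})\big(\pi(\mathcal{A})+\pi(\mathcal{A}\setminus\{i\})\big) + \lambda_i\sum_{k\in\mathcal{A}\cap\mathcal{K}}\mu_k\big(\pi(\mathcal{A}\setminus\{k\})+\pi(\mathcal{A}\setminus\{i,k\})\big)\\ &+\mu(\mathcal{A}\cap\mathcal{K})\sum_{j\in\mathcal{A}\cap\mathcal{I}}\lambda_j\,\ell_i(\mathcal{A}\setminus\{j\}) + \lambda(\mathcal{A}\cap\mathcal{I})\sum_{k\in\mathcal{A}\cap\mathcal{K}}\mu_k\,\ell_i(\mathcal{A}\setminus\{k\})\\ &+\sum_{j\in\mathcal{A}\cap\mathcal{I}}\sum_{k\in\mathcal{A}\cap\mathcal{K}}\lambda_j\mu_k\,\ell_i(\mathcal{A}\setminus\{j,k\}).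 \end{aligned} \]
   Context: Let $\mathcal{I}$ (customer classes) and $\mathcal{K}$ (server classes) be disjoint finite non-empty sets, and consider a connected bipartite graph (the compatibility graph) on $\mathcal{I}\cup\mathcal{K}$ whose edges all join an element of $\mathcal{I}$ to an element of $\mathcal{K}$; write $i\sim k$ if $i\in\mathcal{I}$ and $k\in\mathcal{K}$ are adjacent and $i\nsim k$ otherwise. For $i\in\mathcal{I}$ let $\mathcal{K}_i=\{k\in\mathcal{K}: i\sim k\}$ and for $k\in\mathcal{K}$ let $\mathcal{I}_k=\{i\in\mathcal{I}: i\sim k\}$. Let $\lambda_i>0$ ($i\in\mathcal{I}$) and $\mu_k>0$ ($k\in\mathcal{K}$) with $\sum_i\lambda_i=\sum_k\mu_k=1$. For $\mathcal{A}\subseteq\mathcal{I}$ write $\lambda(\mathcal{A})=\sum_{i\in\mathcal{A}}\lambda_i$ and $\mathcal{K}(\mathcal{A})=\bigcup_{i\in\mathcal{A}}\mathcal{K}_i$; for $\mathcal{A}\subseteq\mathcal{K}$ write $\mu(\mathcal{A})=\sum_{k\in\mathcal{A}}\mu_k$ and $\mathcal{I}(\mathcal{A})=\bigcup_{k\in\mathcal{A}}\mathcal{I}_k$. Model: time is slotted; in each slot exactly one customer and one server arrive, the customer being of class $i$ with probability $\lambda_i$ and the server of class $k$ with probability $\mu_k$, independently within and across slots. Unmatched customers and unmatched servers wait in two queues in arrival order. Upon each arrival (first-come-first-matched policy): (1) the incoming customer is matched with the longest-waiting compatible unmatched server, if any; (2) the incoming server is matched with the longest-waiting compatible unmatched customer,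 if any; (3) if neither can be matched with a waiting item, they are matched with each other if compatible; (4) any incoming item still unmatched is appended to the back of its queue. Matched items leave immediately. The state is $(c,d)$ with $c=(c_1,\dots,c_n)$ the classes of unmatched customers and $d=(d_1,\dots,d_n)$ the classes of unmatched servers, in arrival order (the two lengths are always equal); the state space is $\Pi=\bigcup_{n\ge0}\{(c,d)\in\mathcal{I}^n\times\mathcal{K}^n: c_p\nsim d_q\ \forall p,q\}$, and $\varnothing$ denotes the empty state. For a sequence $c$, $|c|_i$ is the number of occurrences of $i$ in $c$. Stability condition (assumed): $\lambda(\mathcal{A})<\mu(\mathcal{K}(\mathcal{A}))$ for every non-empty $\mathcal{A}\subsetneq\mathcal{I}$ (equivalently $\mu(\mathcal{A})<\lambda(\mathcal{I}(\mathcal{A}))$ for every non-empty $\mathcal{A}\subsetneq\mathcal{K}$). Then the Markov chain of states is ergodic with stationary distribution $\pi(c,d)=\pi(\varnothing)\prod_{p=1}^n \frac{\lambda_{c_p}}{\mu(\mathcal{K}(\{c_1,\dots,c_p\}))}\frac{\mu_{d_p}}{\lambda(\mathcal{I}(\{d_1,\dots,d_p\}))}$, $(c,d)\in\Pi$. Let $\mathcal{J}$ be the family of independent sets $\mathcal{A}\subseteq\mathcal{I}\cup\mathcal{K}$ of the compatibility graph such that $\mathcal{A}\cap\mathcal{I}$ and $\mathcal{A}\cap\mathcal{K}$ are both non-empty, and $\mathcal{J}_0=\mathcal{J}\cup\{\emptyset\}$. For $\mathcal{A}\in\mathcal{J}_0$, let $\Pi_{\mathcal{A}}$ be the set of $(c,d)\in\Pi$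 with $\{c_1,\dots,c_n\}=\mathcal{A}\cap\mathcal{I}$ and $\{d_1,\dots,d_n\}=\mathcal{A}\cap\mathcal{K}$, and $\pi(\mathcal{A})=\sum_{(c,d)\in\Pi_{\mathcal{A}}}\pi(c,d)$; by convention $\pi(\mathcal{A})=0$ if $\mathcal{A}\notin\mathcal{J}_0$. For $\mathcal{A}\in\mathcal{J}$, $\Delta(\mathcal{A})=\mu(\mathcal{K}(\mathcal{A}\cap\mathcal{I}))\,\lambda(\mathcal{I}(\mathcal{A}\cap\mathcal{K}))-\lambda(\mathcal{A}\cap\mathcal{I})\,\mu(\mathcal{A}\cap\mathcal{K})$. *)

From HB Require Import structures.
From mathcomp Require Import all_boot all_order all_algebra fingraph.
From mathcomp Require Import reals.
From mathcomp Require Import topology normedtype sequences.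
Set Implicit Arguments. Unset Strict Implicit. Unset Printing Implicit Defensive.
Import Order.TTheory GRing.Theory Num.Theory numFieldNormedType.Exports.
Local Open Scope ring_scope.

Definition rseries {R : realType} (u : nat -> R) : R :=
  limn (fun N => \sum_(n < N) u n).

Section MatchingModel.
Variables (R : realType) (I K : finType) (adj : I -> K -> bool)
          (lam : I -> R) (mu : K -> R).

Definition compat_edge : rel (I + K) := fun x y =>
  match x, y with
  | inl i, inr k => adj i k
  | inr k, inl i => adj i k
  | _, _ => false
  end.

Definition graph_connected : Prop := forall x y : I + K, connect compat_edge x y.

Definition lamS (A : {set I}) : R := \sum_(i in A) lam i.
Definition muS (A : {set K}) : R := \sum_(k in A) mu k.
Definition KofS (A : {set I}) : {set K} := [set k | [exists i in A, adj i k]].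
Definition IofS (A : {set K}) : {set I} := [set i | [exists k in A, adj i k]].

Definition stable : Prop :=
  forall A : {set I}, A != set0 -> A != [set: I] -> lamS A < muS (KofS A).

Definition partI (A : {set (I + K)}) : {set I} := [set i | inl i \in A].
Definition partK (A : {set (I + K)}) : {set K} := [set k | inr k \in A].
Definition indep (A : {set (I + K)}) : bool :=
  [forall i, forall k, ((inl i \in A) && (inr k \in A)) ==> ~~ adj i k].
Definition inJ (A : {set (I + K)}) : bool :=
  [&& indep A, partI A != set0 & partK A != set0].
Definition inJ0 (A : {set (I + K)}) : bool := inJ A || (A == set0).

(** States with n unmatched customers and n unmatched servers:
    pairs (c, d) of n-tuples with c_p incompatible with d_q for all p, q. *)
Definition valid_state n (c : n.-tuple I) (d : n.-tuple K) : bool :=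
  [forall p, forall q, ~~ adj (tnth c p) (tnth d q)].

Definition state_classes n (c : n.-tuple I) (d : n.-tuple K) : {set (I + K)} :=
  [set x | match x with inl i => i \in c | inr k => k \in d end].

Definition weight n (c : n.-tuple I) (d : n.-tuple K) : R :=
  \prod_(p < n)
    ((lam (tnth c p) / muS (KofS [set x in take p.+1 c]))
     * (mu (tnth d p) / lamS (IofS [set x in take p.+1 d]))).

Definition pi_empty : R :=
  (rseries (fun n => \sum_(c : n.-tuple I) \sum_(d : n.-tuple K | valid_state c d)
      weight c d))^-1.

Definition pi n (c : n.-tuple I) (d : n.-tuple K) : R := pi_empty * weight c d.

Definition piA (A : {set (I + K)}) : R :=
  if inJ0 A then
    rseries (fun n => \sum_(c : n.-tuple I)
       \sum_(d : n.-tuple K | valid_state c d && (state_classes c d == A)) pi c d)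
  else 0.

Definition ell (i : I) (A : {set (I + K)}) : R :=
  if inJ0 A then
    rseries (fun n => \sum_(c : n.-tuple I)
       \sum_(d : n.-tuple K | valid_state c d && (state_classes c d == A))
          ((count_mem i c)%:R * pi c d))
  else 0.

Definition meanL (i : I) : R :=
  rseries (fun n => \sum_(c : n.-tuple I) \sum_(d : n.-tuple K | valid_state c d)
     ((count_mem i c)%:R * pi c d)).

Definition Delta (A : {set (I + K)}) : R :=
  muS (KofS (partI A)) * lamS (IofS (partK A)) - lamS (partI A) * muS (partK A).

End MatchingModel.

From Pilot Require Import Defs.
From HB Require Import structures.
From mathcomp Require Import all_boot all_order all_algebra fingraph.
From mathcomp Require Import reals.
From mathcomp Require Import topology normedtype sequences.
From mathcomp Require Import ring lra.
Import Order.TTheory GRing.Theory Num.Theory numFieldNormedType.Exports.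
Set Implicit Arguments. Unset Strict Implicit. Unset Printing Implicit Defensive.
Local Open Scope ring_scope.

(* The product-form weight of a state is built prefix by prefix, so appending
   an arrival pair (j, k) to a state whose class set becomes A multiplies its
   weight by lam_j mu_k / (mu(K(A_I)) lam(I(A_K))).  Hence the mass of the
   states of length n+1 with class set A is a combination of the masses of the
   states of length n with class sets A, A\j, A\k and A\{j,k}; weighting
   states by |c|_i only adds [j = i] times the unweighted masses.  For the
   partial sums S_A this gives
     mu(K(A_I)) lam(I(A_K)) S_A(N+1) <= lam(A_I) mu(A_K) S_A(N) + M_A,
   where M_A only involves smaller class sets; stability gives
   Delta(A) > 0, so by induction on |A| every S_A converges, and the limit of
   the recursion, rearranged, is the formula for Delta(A) ell_i(A). *)

Section BigTupleRcons.
Variables (R : Type) (idx : R) (op : Monoid.com_law idx).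

Lemma big_tuple_rcons (T : finType) n (F : n.+1.-tuple T -> R) :
  \big[op/idx]_(t : n.+1.-tuple T) F t =
  \big[op/idx]_(t : n.-tuple T) \big[op/idx]_(x : T) F [tuple of rcons t x].
Proof.
rewrite pair_big /=.
rewrite (reindex (fun p : n.-tuple T * T => [tuple of rcons p.1 p.2])) //.
apply: onW_bij; pose lastt := fun t : n.+1.-tuple T => last (thead t) (behead t).
exists (fun t : n.+1.-tuple T => ([tuple of belast (thead t) (behead_tuple t)], lastt t)).
- move=> [t x]; rewrite /lastt /=.
  have := tuple_eta [tuple of rcons t x]; move/(congr1 val) => /=.
  rewrite lastI => /rcons_inj [Et Ex].
  by congr pair => //; apply: val_inj; rewrite /= -Et.
- move=> t; apply: val_inj => /=; rewrite /lastt -lastI.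
  by rewrite [in RHS](tuple_eta t).
Qed.

Lemma big_tuple_rcons2 (T T' : finType) n (G : n.+1.-tuple T -> n.+1.-tuple T' -> R) :
  \big[op/idx]_(t : n.+1.-tuple T) \big[op/idx]_(t' : n.+1.-tuple T') G t t' =
  \big[op/idx]_(x : T) \big[op/idx]_(x' : T')
    \big[op/idx]_(t : n.-tuple T) \big[op/idx]_(t' : n.-tuple T')
      G [tuple of rcons t x] [tuple of rcons t' x'].
Proof.
rewrite big_tuple_rcons.
under [LHS]eq_bigr => t _ do under eq_bigr => x _ do rewrite (big_tuple_rcons (T := T')).
rewrite [LHS]exchange_big; apply: eq_bigr => x _.
under eq_bigr => t _ do rewrite exchange_big.
by rewrite [LHS]exchange_big.
Qed.

End BigTupleRcons.

Section SetU2.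
Variable T : finType.
Implicit Types (S A X Y : {set T}) (a b x : T).

Lemma eq_set_memF x X Y : x \in X -> x \notin Y -> (X == Y) = false.
Proof. by move=> xX; apply: contraNF => /eqP <-. Qed.

Lemma eq_set_memFr x X Y : x \in Y -> x \notin X -> (X == Y) = false.
Proof. by move=> xY xX; rewrite eq_sym (eq_set_memF xY xX). Qed.

Lemma setU2_eq_cases S A a b : a \in A -> b \in A -> a != b ->
  (S :|: [set a; b] == A : nat) =
  ((S == A) + (S == A :\ a) + (S == A :\ b) + (S == A :\ a :\ b))%N.
Proof.
move=> aA bA ab.
have add_eqE x (X B : {set T}) : x \notin X -> x \in B -> (x |: X == B) = (X == B :\ x).
  by move=> xX xB; apply/eqP/eqP => [<-|->]; [rewrite setU1K | rewrite setD1K].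
have add_id x (X : {set T}) : x \in X -> x |: X = X by move=> xX; apply/setUidPr; rewrite sub1set.
have notin_D1 x (X : {set T}) : x \notin X :\ x by rewrite !inE eqxx.
have aAb : a \in A :\ b by rewrite !inE ab.
have bAa : b \in A :\ a by rewrite !inE eq_sym ab.
have aAab : a \notin A :\ a :\ b by rewrite !inE eqxx andbF.
have -> : S :|: [set a; b] = a |: (b |: S) by rewrite setUC -setUA setUC.
have [Sa|Sa] := boolP (a \in S); have [Sb|Sb] := boolP (b \in S).
- rewrite (add_id _ _ Sb) (add_id _ _ Sa) (eq_set_memF Sa (notin_D1 a A)).
  by rewrite (eq_set_memF Sb (notin_D1 b A)) (eq_set_memF Sa aAab) !addn0.
- have aSb : a \in b |: S by rewrite !inE Sa orbT.
  rewrite (add_id _ _ aSb) (add_eqE _ _ _ Sb bA) (eq_set_memFr bA Sb).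
  by rewrite (eq_set_memF Sa (notin_D1 a A)) (eq_set_memF Sa aAab) addn0.
- rewrite (add_id _ _ Sb) (add_eqE _ _ _ Sa aA) (eq_set_memFr aA Sa).
  by rewrite (eq_set_memF Sb (notin_D1 b A)) (eq_set_memF Sb (notin_D1 b _)); case: (_ == _).
- have Sab : a \notin b |: S by rewrite !inE negb_or ab.
  rewrite (add_eqE _ _ _ Sab aA) (add_eqE _ _ _ Sb bAa) (eq_set_memFr aA Sa).
  by rewrite (eq_set_memFr bAa Sb) (eq_set_memFr aAb Sa).
Qed.

End SetU2.

Section Weights.
Variables (R : numDomainType) (T : finType) (w : T -> R).
Hypothesis w_gt0 : forall x, 0 < w x.
Implicit Types S : {set T}.

Lemma sum_weights_gt0 S : S != set0 -> 0 < \sum_(x in S) w x.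
Proof.
case/set0Pn => x xS; rewrite (bigD1 x) //= ltr_pwDl //.
by apply: sumr_ge0 => y _; apply: ltW.
Qed.

Lemma sum_weights_subset S S' : S \subset S' -> \sum_(x in S) w x <= \sum_(x in S') w x.
Proof.
move=> SS'; rewrite [leRHS](big_setID S) /= (setIidPr SS') lerDl.
by apply: sumr_ge0 => y _; apply: ltW.
Qed.

Hypothesis w_sum1 : \sum_x w x = 1.

Lemma sum_weights_setC S : \sum_(x in ~: S) w x = 1 - \sum_(x in S) w x.
Proof.
rewrite -w_sum1 [in RHS](bigID (mem S)) /= [X in X - _]addrC addrK.
by apply: eq_bigl => x; rewrite inE.
Qed.

Lemma sum_weights_lt1 S : S != setT -> \sum_(x in S) w x < 1.
Proof.
move=> S_neqT; rewrite -subr_gt0 -sum_weights_setC sum_weights_gt0 //.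
by apply: contra S_neqT => /eqP SC0; rewrite -[S]setCK SC0 setC0.
Qed.

End Weights.

Lemma nondecreasing_is_cvgn_rec (R : realType) (u : nat -> R) (a C M : R) :
  nondecreasing_seq u -> 0 <= a < C -> (forall N, C * u N.+1 <= a * u N + M) -> cvgn u.
Proof.
move=> u_nd /andP[a_ge0 aC] u_rec; apply: nondecreasing_is_cvgn => //.
exists (M / (C - a)) => _ [N _ <-]; rewrite ler_pdivlMr ?subr_gt0 //.
have CuN : C * u N <= C * u N.+1 by rewrite ler_wpM2l ?u_nd // (le_trans a_ge0 (ltW aC)).
by have := u_rec N; lra.
Qed.

Section StateSums.
Variables (R : realType) (I K : finType) (adj : I -> K -> bool)
          (lam : I -> R) (mu : K -> R).
Hypotheses (lam_gt0 : forall i, 0 < lam i) (mu_gt0 : forall k, 0 < mu k).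

Local Notation W := (weight adj lam mu).
Local Notation valid := (valid_state adj).
Local Notation cls := (@state_classes I K _).

Definition denom (A : {set (I + K)}) : R :=
  muS mu (KofS adj (partI A)) * lamS lam (IofS adj (partK A)).

(* The class sets of the states from which the arrival of the pair (j, k)
   leads to a state with class set A. *)
Definition pred_sum (f : {set (I + K)} -> R) A j k : R :=
  f A + f (A :\ inl j) + f (A :\ inr k) + f (A :\ inl j :\ inr k).

Definition level_sum (h : seq I -> R) (B : {set (I + K)}) n : R :=
  \sum_(c : n.-tuple I) \sum_(d : n.-tuple K | valid c d && (cls c d == B)) h c * W c d.

Definition partial_sum (h : seq I -> R) B N : R := \sum_(n < N) level_sum h B n.

Lemma indep_subset (S A : {set (I + K)}) : S \subset A -> indep adj A -> indep adj S.
Proof.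
move=> /subsetP SA /forallP indA; apply/forallP => i; apply/forallP => k.
by apply/implyP => /andP[iS kS]; apply: (implyP (forallP (indA i) k)); rewrite !SA.
Qed.

Lemma valid_stateE n (c : n.-tuple I) (d : n.-tuple K) : valid c d = indep adj (cls c d).
Proof.
apply/forallP/forallP => [H i|H p].
  apply/forallP => k; rewrite !inE /=; apply/implyP => /andP[ic kd].
  by case/tnthP: ic => p ->; case/tnthP: kd => q ->; exact: (forallP (H p) q).
apply/forallP => q; have := forallP (H (tnth c p)) (tnth d q).
by rewrite !inE /= !mem_tnth.
Qed.

Lemma partI_classes n (c : n.-tuple I) (d : n.-tuple K) : partI (cls c d) = [set x in c].
Proof. by apply/setP => x; rewrite !inE. Qed.

Lemma partK_classes n (c : n.-tuple I) (d : n.-tuple K) : partK (cls c d) = [set x in d].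
Proof. by apply/setP => x; rewrite !inE. Qed.

Lemma classes_tuple0 (c : 0.-tuple I) (d : 0.-tuple K) : cls c d = set0.
Proof. by rewrite (tuple0 c) (tuple0 d); apply/setP => -[x|x]; rewrite !inE. Qed.

Lemma classes_J n (c : n.-tuple I) (d : n.-tuple K) :
  (0 < n)%N -> valid c d -> inJ adj (cls c d).
Proof.
case: n c d => // n c d _ cd_valid; rewrite /inJ -valid_stateE cd_valid /=.
by apply/andP; split; apply/set0Pn; [exists (thead c) | exists (thead d)];
  rewrite !inE /= mem_tnth.
Qed.

Lemma classes_J0 n (c : n.-tuple I) (d : n.-tuple K) : valid c d -> inJ0 adj (cls c d).
Proof.
case: n c d => [|n] c d cd_valid; first by rewrite classes_tuple0 /inJ0 eqxx orbT.
by rewrite /inJ0 classes_J.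
Qed.

Lemma classes_rcons n (c : n.-tuple I) (d : n.-tuple K) j k :
  cls [tuple of rcons c j] [tuple of rcons d k] = cls c d :|: [set inl j; inr k].
Proof. by apply/setP => -[x|x]; rewrite !inE /= mem_rcons in_cons ?orbF orbC. Qed.

Lemma weight_ge0 n (c : n.-tuple I) (d : n.-tuple K) : 0 <= W c d.
Proof.
apply: prodr_ge0 => p _; apply: mulr_ge0; apply: divr_ge0;
  by [apply: ltW | apply: sumr_ge0 => x _; apply: ltW].
Qed.

Lemma weight_rcons n (c : n.-tuple I) (d : n.-tuple K) j k :
  W [tuple of rcons c j] [tuple of rcons d k] =
  W c d * ((lam j / muS mu (KofS adj [set x in rcons c j]))
           * (mu k / lamS lam (IofS adj [set x in rcons d k]))).
Proof.
rewrite /weight big_ord_recr /=; congr (_ * _).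
  apply: eq_bigr => p _.
  have [pc pd] : (p < size c)%N /\ (p < size d)%N by rewrite !size_tuple.
  rewrite !(tnth_nth j) !(tnth_nth k) /= !nth_rcons pc pd -(tnth_nth j) -(tnth_nth k).
  by rewrite -!cats1 !takel_cat ?size_tuple.
by rewrite !(tnth_nth j) !(tnth_nth k) /= !nth_rcons !size_tuple ltnn !eqxx
   !take_oversize // size_rcons size_tuple.
Qed.

Lemma weight_rcons_classes (A : {set (I + K)}) n (c : n.-tuple I) (d : n.-tuple K) j k x :
  inJ adj A -> denom A != 0 ->
  denom A * ((valid [tuple of rcons c j] [tuple of rcons d k]
              && (cls [tuple of rcons c j] [tuple of rcons d k] == A))%:R
             * (x * W [tuple of rcons c j] [tuple of rcons d k])) =
  lam j * mu k * ((valid c d && (cls c d :|: [set inl j; inr k] == A))%:R * (x * W c d)).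
Proof.
move=> /and3P[indA _ _] denA; rewrite classes_rcons.
case: (cls c d :|: _ =P A) => [clsA|_]; last by rewrite !andbF /= !mul0r !mulr0.
rewrite !valid_stateE classes_rcons clsA indA (indep_subset _ indA); last first.
  by rewrite -clsA subsetUl.
have partIA : [set x in rcons c j] = partI A.
  by rewrite -(partI_classes [tuple of rcons c j] [tuple of rcons d k]) classes_rcons clsA.
have partKA : [set x in rcons d k] = partK A.
  by rewrite -(partK_classes [tuple of rcons c j] [tuple of rcons d k]) classes_rcons clsA.
move: denA; rewrite weight_rcons partIA partKA /denom mulf_eq0 negb_or => /andP[muA lamA].
by rewrite !mul1r; field; rewrite muA lamA.
Qed.

Lemma level_sumE h B n : level_sum h B n =
  \sum_(c : n.-tuple I) \sum_(d : n.-tuple K) (valid c d && (cls c d == B))%:R * (h c * W c d).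
Proof.
apply: eq_bigr => c _; rewrite big_mkcond; apply: eq_bigr => d _.
by case: (_ && _); rewrite ?mul1r ?mul0r.
Qed.

Lemma pred_sum_level_sum h (A : {set (I + K)}) j k n : inl j \in A -> inr k \in A ->
  pred_sum (level_sum h ^~ n) A j k =
  \sum_(c : n.-tuple I) \sum_(d : n.-tuple K)
     (valid c d && (cls c d :|: [set inl j; inr k] == A))%:R * (h c * W c d).
Proof.
move=> jA kA; rewrite /pred_sum !level_sumE -!big_split; apply: eq_bigr => c _.
rewrite -!big_split; apply: eq_bigr => d _ /=.
case: (valid c d); last by rewrite !mul0r !addr0.
by rewrite /= setU2_eq_cases // !natrD !mulrDl.
Qed.

Lemma level_sum_rcons h (A : {set (I + K)}) n : inJ adj A -> denom A != 0 ->
  denom A * level_sum h A n.+1 =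
  \sum_(j in partI A) \sum_(k in partK A)
     lam j * mu k * pred_sum (level_sum (fun s => h (rcons s j)) ^~ n) A j k.
Proof.
move=> JA denA; rewrite level_sumE big_tuple_rcons2 mulr_sumr.
under eq_bigr => j _ do (rewrite mulr_sumr; under eq_bigr => k _ do
  (rewrite mulr_sumr; under eq_bigr => c _ do (rewrite mulr_sumr; under eq_bigr => d _ do
    rewrite (weight_rcons_classes _ _ _ _ _ JA denA)))).
rewrite [RHS]big_mkcond; apply: eq_bigr => j _; rewrite inE.
have [jA|jA] := boolP (inl j \in A); last first.
  rewrite big1 // => k _; rewrite big1 // => c _; rewrite big1 // => d _.
  by rewrite (@eq_set_memF _ (inl j)) ?andbF ?mul0r ?mulr0 // !inE eqxx ?orbT.
rewrite [RHS]big_mkcond; apply: eq_bigr => k _; rewrite inE.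
have [kA|kA] := boolP (inr k \in A); last first.
  rewrite big1 // => c _; rewrite big1 // => d _.
  by rewrite (@eq_set_memF _ (inr k)) ?andbF ?mul0r ?mulr0 // !inE eqxx ?orbT.
rewrite pred_sum_level_sum // mulr_sumr; apply: eq_bigr => c _.
by rewrite mulr_sumr; apply: eq_bigr.
Qed.

Lemma level_sum_ge0 h B n : (forall s, 0 <= h s) -> 0 <= level_sum h B n.
Proof.
by move=> h_ge0; do 2!apply: sumr_ge0 => ? _; rewrite mulr_ge0 ?weight_ge0.
Qed.

Lemma partial_sum_nondecreasing h B :
  (forall s, 0 <= h s) -> nondecreasing_seq (partial_sum h B).
Proof.
move=> h_ge0; apply/nondecreasing_seqP => N.
by rewrite /partial_sum big_ord_recr lerDl level_sum_ge0.
Qed.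

Lemma level_sum0 h B : inJ adj B -> level_sum h B 0 = 0.
Proof.
move=> JB; apply: big1 => c _; apply: big1 => d /andP[_ /eqP clsB].
have partI0 : partI (set0 : {set (I + K)}) = set0 by apply/setP => x; rewrite !inE.
by move: JB; rewrite -clsB classes_tuple0 /inJ partI0 eqxx andbF.
Qed.

Lemma level_sum_notJ h B n : ~~ inJ adj B -> (0 < n)%N -> level_sum h B n = 0.
Proof.
move=> notJB n_gt0; apply: big1 => c _; apply: big1 => d /andP[cd_valid /eqP clsB].
by move: notJB; rewrite -clsB classes_J.
Qed.

Lemma partial_sum_notJ0 h B N : ~~ inJ0 adj B -> partial_sum h B N = 0.
Proof.
move=> notJ0B; apply: big1 => n _; apply: big1 => c _.
apply: big1 => d /andP[cd_valid /eqP clsB].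
by move: notJ0B; rewrite -clsB classes_J0.
Qed.

Lemma partial_sum_linear h h' g e B N : (forall s, h' s = h s + e * g s) ->
  partial_sum h' B N = partial_sum h B N + e * partial_sum g B N.
Proof.
move=> h'E; rewrite /partial_sum mulr_sumr -big_split; apply: eq_bigr => n _ /=.
rewrite /level_sum mulr_sumr -big_split; apply: eq_bigr => c _ /=.
rewrite mulr_sumr -big_split; apply: eq_bigr => d _ /=.
by rewrite h'E mulrDl mulrA.
Qed.

Lemma partial_sum_rcons h (A : {set (I + K)}) N : inJ adj A -> denom A != 0 ->
  denom A * partial_sum h A N.+1 =
  \sum_(j in partI A) \sum_(k in partK A)
     lam j * mu k * pred_sum (partial_sum (fun s => h (rcons s j)) ^~ N) A j k.
Proof.
move=> JA denA; rewrite /partial_sum big_ord_recl level_sum0 // add0r mulr_sumr.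
under eq_bigr => n _ do rewrite /bump /= level_sum_rcons //.
rewrite exchange_big; apply: eq_bigr => j _.
rewrite exchange_big; apply: eq_bigr => k _.
by rewrite -mulr_sumr /pred_sum -!big_split.
Qed.

Lemma pi_level_sum (h : seq I -> R) B n :
  \sum_(c : n.-tuple I) \sum_(d : n.-tuple K | valid c d && (cls c d == B))
     h c * Defs.pi adj lam mu c d = pi_empty adj lam mu * level_sum h B n.
Proof.
rewrite mulr_sumr; apply: eq_bigr => c _; rewrite mulr_sumr; apply: eq_bigr => d _.
by rewrite mulrCA.
Qed.

Lemma ell_notin i (A : {set (I + K)}) : inl i \notin A -> ell adj lam mu i A = 0.
Proof.
move=> iA; rewrite /ell; case: ifP => // _.
rewrite /rseries (_ : (fun N => _) = fun=> 0) ?lim_cst //.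
apply: boolp.funext => N; apply: big1 => n _; apply: big1 => c _.
apply: big1 => d /andP[_ /eqP clsA].
suff /count_memPn -> : i \notin c by rewrite mul0r.
by apply: contra iA => ic; rewrite -clsA inE.
Qed.

Section DoubleSums.
Variables (X : {set I}) (Y : {set K}).

Lemma sum_lam_mu_const x :
  \sum_(j in X) \sum_(k in Y) lam j * mu k * x = lamS lam X * muS mu Y * x.
Proof.
rewrite /lamS /muS !mulr_suml; apply: eq_bigr => j _.
by rewrite mulr_sumr mulr_suml; apply: eq_bigr => k _.
Qed.

Lemma sum_lam_mu_l (f : I -> R) :
  \sum_(j in X) \sum_(k in Y) lam j * mu k * f j = muS mu Y * \sum_(j in X) lam j * f j.
Proof.
rewrite mulr_sumr; apply: eq_bigr => j _; rewrite /muS !mulr_suml.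
by apply: eq_bigr => k _; rewrite mulrAC mulrC mulrA.
Qed.

Lemma sum_lam_mu_r (f : K -> R) :
  \sum_(j in X) \sum_(k in Y) lam j * mu k * f k = lamS lam X * \sum_(k in Y) mu k * f k.
Proof.
rewrite exchange_big mulr_sumr; apply: eq_bigr => k _; rewrite /lamS mulr_suml.
by apply: eq_bigr => j _; rewrite -!mulrA [mu k * _]mulrC.
Qed.

Lemma sum_lam_mu_eq i (F : I -> K -> R) : i \in X ->
  \sum_(j in X) \sum_(k in Y) (j == i)%:R * (lam j * mu k * F j k) =
  lam i * \sum_(k in Y) mu k * F i k.
Proof.
move=> iX; rewrite (bigD1 i) //= [X in _ + X]big1 ?addr0 => [|j /andP[_ /negPf ->]].
  by rewrite mulr_sumr; apply: eq_bigr => k _; rewrite eqxx mul1r mulrA.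
by apply: big1 => k _; rewrite mul0r.
Qed.

End DoubleSums.

Lemma Delta_mul_eq (m l : {set (I + K)} -> R) (A : {set (I + K)}) i : inl i \in A ->
  denom A * m A = \sum_(j in partI A) \sum_(k in partK A)
                    lam j * mu k * (pred_sum m A j k + (j == i)%:R * pred_sum l A j k) ->
  Delta adj lam mu A * m A =
    lam i * muS mu (partK A) * (l A + l (A :\ inl i))
  + lam i * \sum_(k in partK A) mu k * (l (A :\ inr k) + l (A :\ inl i :\ inr k))
  + muS mu (partK A) * \sum_(j in partI A) lam j * m (A :\ inl j)
  + lamS lam (partI A) * \sum_(k in partK A) mu k * m (A :\ inr k)
  + \sum_(j in partI A) \sum_(k in partK A) lam j * mu k * m (A :\ inl j :\ inr k).
Proof.
move=> iA m_rec; have iX : i \in partI A by rewrite inE.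
have -> : Delta adj lam mu A = denom A - lamS lam (partI A) * muS mu (partK A) by [].
have l_split : \sum_(k in partK A) mu k * pred_sum l A i k =
    muS mu (partK A) * (l A + l (A :\ inl i))
  + \sum_(k in partK A) mu k * (l (A :\ inr k) + l (A :\ inl i :\ inr k)).
  rewrite /muS mulr_suml -big_split; apply: eq_bigr => k _.
  by rewrite /pred_sum /=; ring.
rewrite mulrBl m_rec -(sum_lam_mu_const _ _ (m A)) -sum_lam_mu_l -sum_lam_mu_r.
rewrite -mulrA -mulrDr -l_split -(sum_lam_mu_eq _ (fun j k => pred_sum l A j k) iX).
apply/eqP; rewrite subr_eq -!big_split /=; apply/eqP; apply: eq_bigr => j _.
rewrite -!big_split; apply: eq_bigr => k _ /=.
rewrite /pred_sum; ring.
Qed.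

End StateSums.

Section StableModel.
Variables (R : realType) (I K : finType) (adj : I -> K -> bool)
          (lam : I -> R) (mu : K -> R).
Hypotheses (I_gt0 : (0 < #|I|)%N) (K_gt0 : (0 < #|K|)%N).
Hypothesis adj_connected : graph_connected adj.
Hypotheses (lam_gt0 : forall i, 0 < lam i) (mu_gt0 : forall k, 0 < mu k).
Hypotheses (lam_sum1 : \sum_i lam i = 1) (mu_sum1 : \sum_k mu k = 1).
Hypothesis lam_mu_stable : stable adj lam mu.

Lemma exists_adj_customer k : exists i, adj i k.
Proof.
case/card_gt0P: I_gt0 => i0 _.
case/connectP: (adj_connected (inr k) (inl i0)) => -[|[i|k'] p] //=.
by case/andP => ik _ _; exists i.
Qed.

Lemma exists_adj_server i : exists k, adj i k.
Proof.
case/card_gt0P: K_gt0 => k0 _.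
case/connectP: (adj_connected (inl i) (inr k0)) => -[|[i'|k] p] //=.
by case/andP => ik _ _; exists k.
Qed.

Lemma stable_servers (Y : {set K}) : Y != set0 -> Y != setT ->
  muS mu Y < lamS lam (IofS adj Y).
Proof.
move=> Y_neq0 Y_neqT; set Z := ~: IofS adj Y.
have [Z0|Z_neq0] := eqVneq Z set0.
  have IY : IofS adj Y = setT by rewrite -[IofS _ _]setCK -/Z Z0 setC0.
  rewrite IY [lamS _ _](eq_bigl predT) ?lam_sum1; last by move=> i; rewrite inE.
  exact: sum_weights_lt1.
have Z_neqT : Z != setT.
  case/set0Pn: Y_neq0 => k kY; have [i ik] := exists_adj_customer k.
  apply/eqP => /setP /(_ i); rewrite !inE => /negP; apply.
  by apply/existsP; exists k; rewrite kY.
have KZ_Y : KofS adj Z \subset ~: Y.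
  apply/subsetP => k; rewrite !inE => /existsP[i /andP[iZ ik]].
  apply: contraL iZ => kY; rewrite !inE negbK.
  by apply/existsP; exists k; rewrite kY.
have := lam_mu_stable Z_neq0 Z_neqT.
have := sum_weights_subset mu_gt0 KZ_Y.
rewrite /lamS /muS !sum_weights_setC //; lra.
Qed.

Lemma partI_neqT (A : {set (I + K)}) : inJ adj A -> partI A != setT.
Proof.
case/and3P => /forallP indA _ /set0Pn[k]; rewrite inE => kA.
have [i ik] := exists_adj_customer k.
apply/eqP => /setP /(_ i); rewrite !inE => iA.
by have := forallP (indA i) k; rewrite iA kA ik.
Qed.

Lemma partK_neqT (A : {set (I + K)}) : inJ adj A -> partK A != setT.
Proof.
case/and3P => /forallP indA /set0Pn[i]; rewrite inE => iA _.
have [k ik] := exists_adj_server i.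
apply/eqP => /setP /(_ k); rewrite !inE => kA.
by have := forallP (indA i) k; rewrite iA kA ik.
Qed.

Lemma Delta_gt0 (A : {set (I + K)}) : inJ adj A -> 0 < Delta adj lam mu A.
Proof.
move=> JA; have /and3P[_ XA_neq0 YA_neq0] := JA.
rewrite subr_gt0 ltr_pM ?sumr_ge0 // => [i _|k _||]; rewrite ?ltW //.
  exact: lam_mu_stable (partI_neqT JA).
exact: stable_servers (partK_neqT JA).
Qed.

Lemma denom_gt0 (A : {set (I + K)}) : inJ adj A -> 0 < denom adj lam mu A.
Proof.
move=> JA; apply: lt_le_trans (Delta_gt0 JA) _.
by rewrite /Delta gerBl mulr_ge0 ?sumr_ge0 // => ? _; apply: ltW.
Qed.

Local Notation psum := (partial_sum adj lam mu).
Local Notation lim_psum f X := (limn (partial_sum adj lam mu f X)).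

Lemma partial_sum_le_lim h B N : (forall s, 0 <= h s) -> cvgn (psum h B) ->
  psum h B N <= lim_psum h B.
Proof.
by move=> h_ge0 h_cvg; apply: nondecreasing_cvgn_le => //; apply: partial_sum_nondecreasing.
Qed.

Section ObservableShift.
Variables (h g : seq I -> R) (e : I -> R).
Hypotheses (h_ge0 : forall s, 0 <= h s) (g_ge0 : forall s, 0 <= g s).
Hypothesis e_ge0 : forall j, 0 <= e j.
Hypothesis h_rcons : forall s j, h (rcons s j) = h s + e j * g s.
Hypothesis g_cvg : forall B, cvgn (psum g B).
Local Open Scope classical_set_scope.

Lemma partial_sum_rec (A : {set (I + K)}) N : inJ adj A ->
  denom adj lam mu A * psum h A N.+1 =
  \sum_(j in partI A) \sum_(k in partK A) lam j * mu k *
    (pred_sum (psum h ^~ N) A j k + e j * pred_sum (psum g ^~ N) A j k).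
Proof.
move=> JA; rewrite partial_sum_rcons // ?gt_eqF ?denom_gt0 //.
apply: eq_bigr => j _; apply: eq_bigr => k _; congr (_ * _).
by rewrite /pred_sum !(partial_sum_linear adj lam mu _ _ (h_rcons ^~ j)); ring.
Qed.

Lemma partial_sum_cvg B : cvgn (psum h B).
Proof.
have [m] := ubnP #|B|; elim: m B => // m IHm B; rewrite ltnS => Bm.
have h_nd : nondecreasing_seq (psum h B) by apply: partial_sum_nondecreasing.
have [JB|notJB] := boolP (inJ adj B); last first.
  apply: nondecreasing_is_cvgn => //; exists (level_sum adj lam mu h B 0) => _ [[|N] _ <-].
    by rewrite /partial_sum big_ord0 level_sum_ge0.
  by rewrite /partial_sum big_ord_recl big1 ?addr0 // => n _; apply: level_sum_notJ.
have IH x (X : {set (I + K)}) : x \in B -> X \subset B :\ x -> cvgn (psum h X).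
  move=> xB XB; apply: IHm; apply: leq_ltn_trans (subset_leq_card XB) _.
  by rewrite (cardsD1 x B) xB in Bm.
pose M := \sum_(j in partI B) \sum_(k in partK B) lam j * mu k *
  (lim_psum h (B :\ inl j) + lim_psum h (B :\ inr k) + lim_psum h (B :\ inl j :\ inr k)
   + e j * pred_sum (fun X => lim_psum g X) B j k).
have lam_mu_ge0 : 0 <= lamS lam (partI B) * muS mu (partK B).
  by rewrite mulr_ge0 ?sumr_ge0 // => ? _; apply: ltW.
apply: (nondecreasing_is_cvgn_rec (a := lamS lam (partI B) * muS mu (partK B))
          (C := denom adj lam mu B) (M := M) h_nd) => [|N].
  by rewrite lam_mu_ge0 -subr_gt0 Delta_gt0.
rewrite partial_sum_rec // -sum_lam_mu_const -big_split; apply: ler_sum => j.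
rewrite inE => jB; rewrite -big_split; apply: ler_sum => k; rewrite inE => kB /=.
rewrite -mulrDr; apply: ler_wpM2l; first by rewrite mulr_ge0 // ltW.
rewrite /pred_sum -!addrA lerD2l !addrA.
apply: lerD; first (apply: lerD; first apply: lerD); try apply: partial_sum_le_lim => //.
- exact: IH jB (subxx _).
- exact: IH kB (subxx _).
- exact: IH jB (subsetDl _ _).
by apply: ler_wpM2l => //; repeat apply: lerD; apply: partial_sum_le_lim.
Qed.

Lemma pred_sum_cvg f (A : {set (I + K)}) j k : (forall X, cvgn (psum f X)) ->
  pred_sum (psum f ^~ N) A j k @[N --> \oo] --> pred_sum (fun X => lim_psum f X) A j k.
Proof. by move=> f_cvg; rewrite /pred_sum; repeat apply: cvgD; apply: f_cvg. Qed.

Lemma lim_partial_sum_rec (A : {set (I + K)}) : inJ adj A ->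
  denom adj lam mu A * lim_psum h A =
  \sum_(j in partI A) \sum_(k in partK A) lam j * mu k *
    (pred_sum (fun X => lim_psum h X) A j k + e j * pred_sum (fun X => lim_psum g X) A j k).
Proof.
move=> JA.
have lhs_cvg : denom adj lam mu A * psum h A N.+1 @[N --> \oo] -->
               denom adj lam mu A * lim_psum h A.
  by apply: cvgMl_tmp; rewrite cvg_shiftS; apply: partial_sum_cvg.
apply: (cvg_unique _ lhs_cvg) => //; rewrite /classical_sets.mkset.
under eq_cvg do rewrite partial_sum_rec //.
apply: cvg_big => // [|j _]; first exact: add_continuous.
apply: cvg_big => // [|k _]; first exact: add_continuous.
apply: cvgMl_tmp; apply: cvgD; first exact: pred_sum_cvg partial_sum_cvg.
by apply: cvgMl_tmp; apply: pred_sum_cvg.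
Qed.

End ObservableShift.

Definition count_in i (s : seq I) : R := (count_mem i s)%:R.

Lemma partial_sum_one_cvg B : cvgn (psum (fun=> 1) B).
Proof.
have zero_cvg X : cvgn (psum (fun=> 0) X).
  suff -> : psum (fun=> 0) X = fun=> 0 by apply: is_cvg_cst.
  by apply: boolp.funext => N; do 3!(apply: big1 => ? _); rewrite mul0r.
apply: (partial_sum_cvg (fun=> ler01) (fun=> lexx 0) (fun=> lexx 0) _ zero_cvg) => s j.
by rewrite mul0r addr0.
Qed.

Lemma count_in_ge0 i s : 0 <= count_in i s.
Proof. exact: ler0n. Qed.

Lemma count_in_rcons i s j : count_in i (rcons s j) = count_in i s + (j == i)%:R * 1.
Proof. by rewrite /count_in -cats1 count_cat natrD mulr1 /= addn0. Qed.

Lemma partial_sum_count_cvg i B : cvgn (psum (count_in i) B).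
Proof.
exact: partial_sum_cvg (count_in_ge0 i) (fun=> ler01) (fun=> ler0n _ _) (count_in_rcons i)
                       partial_sum_one_cvg B.
Qed.

Lemma series_classes h B : cvgn (psum h B) ->
  (if inJ0 adj B then
     rseries (fun n => \sum_(c : n.-tuple I)
       \sum_(d : n.-tuple K | valid_state adj c d && (state_classes c d == B))
          h c * Defs.pi adj lam mu c d)
   else 0) = pi_empty adj lam mu * lim_psum h B.
Proof.
move=> h_cvg; case: ifPn => [_|notJ0B]; last first.
  rewrite (_ : psum h B = fun=> 0) ?lim_cst ?mulr0 //.
  by apply: boolp.funext => N; apply: partial_sum_notJ0.
rewrite /rseries (_ : (fun N => _) = fun N => pi_empty adj lam mu * psum h B N).
  by apply: cvg_lim => //; apply: cvgMl_tmp.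
apply: boolp.funext => N; rewrite /partial_sum mulr_sumr.
by apply: eq_bigr => n _; apply: pi_level_sum.
Qed.

Lemma piA_lim B : piA adj lam mu B = pi_empty adj lam mu * lim_psum (fun=> 1) B.
Proof.
rewrite -(series_classes (partial_sum_one_cvg (B := B))) /piA; case: ifP => // _.
by congr rseries; apply: boolp.funext => n; do 2!(apply: eq_bigr => ? _); rewrite mul1r.
Qed.

Lemma ell_lim i B : ell adj lam mu i B = pi_empty adj lam mu * lim_psum (count_in i) B.
Proof. exact: series_classes (partial_sum_count_cvg (i := i) (B := B)). Qed.

Lemma ell_rec i (A : {set (I + K)}) : inJ adj A ->
  denom adj lam mu A * ell adj lam mu i A =
  \sum_(j in partI A) \sum_(k in partK A) lam j * mu k *
    (pred_sum (ell adj lam mu i) A j k + (j == i)%:R * pred_sum (piA adj lam mu) A j k).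
Proof.
move=> JA; rewrite ell_lim mulrCA.
rewrite (lim_partial_sum_rec (count_in_ge0 i) (fun=> ler01) (fun=> ler0n _ _)
           (count_in_rcons i) partial_sum_one_cvg JA).
rewrite mulr_sumr; apply: eq_bigr => j _; rewrite mulr_sumr; apply: eq_bigr => k _.
by rewrite /pred_sum !ell_lim !piA_lim; ring.
Qed.

Lemma meanL_sum_ell i :
  meanL adj lam mu i = \sum_(A : {set (I + K)} | inJ0 adj A) ell adj lam mu i A.
Proof.
have meanL_partial N :
  \sum_(n < N) \sum_(c : n.-tuple I) \sum_(d : n.-tuple K | valid_state adj c d)
     count_in i c * Defs.pi adj lam mu c d =
  \sum_(A | inJ0 adj A) pi_empty adj lam mu * psum (count_in i) A N.
  under [RHS]eq_bigr => A _ do rewrite mulr_sumr.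
  rewrite exchange_big; apply: eq_bigr => n _.
  under [RHS]eq_bigr => A _ do rewrite -pi_level_sum.
  rewrite exchange_big; apply: eq_bigr => c _.
  by rewrite (partition_big (state_classes c) (inJ0 adj)) // => d; apply: classes_J0.
under eq_bigr => A _ do rewrite ell_lim.
rewrite /meanL /rseries; apply: cvg_lim => //; under eq_cvg do rewrite meanL_partial.
apply: cvg_big => // [|A _]; first exact: add_continuous.
by apply: cvgMl_tmp; apply: partial_sum_count_cvg.
Qed.

End StableModel.

Theorem proposition2 (R : realType) (I K : finType) (adj : I -> K -> bool)
    (lam : I -> R) (mu : K -> R)
    (HI : (0 < #|I|)%N) (HK : (0 < #|K|)%N)
    (Hconn : graph_connected adj)
    (Hlam : forall i, 0 < lam i) (Hmu : forall k, 0 < mu k)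
    (Hlam1 : \sum_(i : I) lam i = 1) (Hmu1 : \sum_(k : K) mu k = 1)
    (Hstab : stable adj lam mu)
    (i : I) :
  meanL adj lam mu i = \sum_(A : {set (I + K)} | inJ0 adj A) ell adj lam mu i A
  /\ (forall A : {set (I + K)}, inl i \notin A -> ell adj lam mu i A = 0)
  /\ (forall A : {set (I + K)}, inJ adj A -> inl i \in A ->
      Delta adj lam mu A * ell adj lam mu i A =
        lam i * muS mu (partK A)
          * (piA adj lam mu A + piA adj lam mu (A :\ inl i))
      + lam i * \sum_(k in partK A)
          mu k * (piA adj lam mu (A :\ inr k) + piA adj lam mu (A :\ inl i :\ inr k))
      + muS mu (partK A) * \sum_(j in partI A) lam j * ell adj lam mu i (A :\ inl j)
      + lamS lam (partI A) * \sum_(k in partK A) mu k * ell adj lam mu i (A :\ inr k)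
      + \sum_(j in partI A) \sum_(k in partK A)
          lam j * mu k * ell adj lam mu i (A :\ inl j :\ inr k)).
Proof.
split; first exact: meanL_sum_ell.
split; first exact: ell_notin.
move=> A JA iA; apply: Delta_mul_eq iA _.
exact: ell_rec.
Qed.
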